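(* Let $\Gamma=(V,E)$ be a weakly connected simple digraph and $G$ a finite group. Then there exists a map $\rho:E\to G$ such that the voltage graph $(\Gamma,\rho)$ is structurally balanced and nondegenerate if and only if $|V|\ge|G|$.
   Context: $e_{ij}$ is the edge $v_i\to v_j$. A semi-walk from $v_{i_1}$ to $v_{i_n}$ is $w=v_{i_1}a_1\dots a_{n-1}v_{i_n}$ with each $a_j\in\{e_{i_ji_{j+1}},e_{i_{j+1}i_j}\}$; it is closed if $v_{i_1}=v_{i_n}$. $\Gamma$ is weakly connected if any two vertices are joined by a semi-walk. Net voltage: $f(w)=\bar\rho(a_1)\cdots\bar\rho(a_{n-1})$ with $\bar\rho(a_j)=\rho(a_j)$ if $a_j=e_{i_ji_{j+1}}$ and $\rho(a_j)^{-1}$ otherwise; $f$ of a single-vertex semi-walk is the identity $\mathbf 1$. $(\Gamma,\rho)$ is structurally balanced if $f(w)=\mathbf 1$ for every closed semi-walk $w$. With $\mathrm{Net}(v_i,V)=\{f(w): w$ a semi-walk starting at $v_i\}$, $(\Gamma,\rho)$ is nondegenerate if $\mathrm{Net}(v_i,V)=G$ for some vertex $v_i$. *)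

From mathcomp Require Import all_boot all_fingroup.
Set Implicit Arguments. Unset Strict Implicit. Unset Printing Implicit Defensive.
Local Open Scope group_scope.

(* A simple digraph on a finite vertex set V is an irreflexive relation
   e : rel V (e u v means the edge e_uv : u -> v exists; no multi-edges).
   A semi-walk starting at x is encoded as a sequence of steps (y, d):
   the next vertex y and the direction d of the edge used
   (d = true: edge x -> y is traversed forwards;
    d = false: edge y -> x is traversed backwards). *)

Section SemiWalks.
Variables (V : finType) (e : rel V).

Definition simple_digraph := irreflexive e.

Fixpoint semiwalk (x : V) (s : seq (V * bool)) : bool :=
  match s with
  | [::] => true
  | (y, d) :: s' => (if d then e x y else e y x) && semiwalk y s'
  end.

Definition sw_end (x : V) (s : seq (V * bool)) : V := last x (map fst s).

Definition weakly_connected : Prop :=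
  forall u v : V, exists s, semiwalk u s /\ sw_end u s = v.

Variable gT : finGroupType.
(* voltage assignment; only its values on edges e u v are ever used *)
Variable rho : V -> V -> gT.

Fixpoint net_voltage (x : V) (s : seq (V * bool)) : gT :=
  match s with
  | [::] => 1
  | (y, d) :: s' => (if d then rho x y else (rho y x)^-1) * net_voltage y s'
  end.

Definition structurally_balanced : Prop :=
  forall x s, semiwalk x s -> sw_end x s = x -> net_voltage x s = 1.

Definition Net_full (v : V) : Prop :=
  forall g : gT, exists s, semiwalk v s /\ net_voltage v s = g.

Definition nondegenerate : Prop := exists v : V, Net_full v.

End SemiWalks.

From mathcomp Require Import all_boot all_fingroup.
Set Implicit Arguments. Unset Strict Implicit. Unset Printing Implicit Defensive.
Local Open Scope group_scope.

(* In a structurally balanced voltage graph the net voltage of a semi-walk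
   depends only on its endpoints, since a walk followed by the reverse of
   another one with the same endpoints is closed. Hence, if Net(v, V) = G,
   sending g to the endpoint of a semi-walk from v of net voltage g is
   injective, and |G| <= |V|. Conversely, for a surjection phi : V -> G the
   voltages rho(x, y) = phi(x)^-1 phi(y) telescope along every semi-walk, so
   they are balanced, and by weak connectivity every group element occurs
   as a net voltage. *)

Section SemiWalkAlgebra.
Variables (V : finType) (e : rel V) (gT : finGroupType) (rho : V -> V -> gT).

Lemma semiwalk_cat (x : V) (s1 s2 : seq (V * bool)) :
  semiwalk e x (s1 ++ s2) = semiwalk e x s1 && semiwalk e (sw_end x s1) s2.
Proof. by elim: s1 x => [|[y d] s IH] x //=; rewrite IH andbA. Qed.

Lemma sw_end_cat (x : V) (s1 s2 : seq (V * bool)) :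
  sw_end x (s1 ++ s2) = sw_end (sw_end x s1) s2.
Proof. by rewrite /sw_end map_cat last_cat. Qed.

Lemma sw_end_cons (x y : V) (d : bool) (s : seq (V * bool)) :
  sw_end x ((y, d) :: s) = sw_end y s.
Proof. by []. Qed.

Lemma net_voltage_cat (x : V) (s1 s2 : seq (V * bool)) :
  net_voltage rho x (s1 ++ s2) =
  net_voltage rho x s1 * net_voltage rho (sw_end x s1) s2.
Proof.
elim: s1 x => [|[y d] s IH] x /=; first by rewrite mul1g.
by rewrite IH mulgA.
Qed.

Fixpoint sw_rev (x : V) (s : seq (V * bool)) : seq (V * bool) :=
  match s with
  | [::] => [::]
  | (y, d) :: s' => rcons (sw_rev y s') (x, ~~ d)
  end.

Lemma sw_end_rev (x : V) (s : seq (V * bool)) :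
  sw_end (sw_end x s) (sw_rev x s) = x.
Proof.
elim: s x => [|[y d] s IH] x //=.
by rewrite sw_end_cons -cats1 sw_end_cat IH.
Qed.

Lemma semiwalk_rev (x : V) (s : seq (V * bool)) :
  semiwalk e x s -> semiwalk e (sw_end x s) (sw_rev x s).
Proof.
elim: s x => [|[y d] s IH] x //= /andP[exy ws].
rewrite sw_end_cons -cats1 semiwalk_cat IH //= sw_end_rev andbT.
by case: d exy.
Qed.

Lemma net_voltage_rev (x : V) (s : seq (V * bool)) :
  net_voltage rho (sw_end x s) (sw_rev x s) = (net_voltage rho x s)^-1.
Proof.
elim: s x => [|[y d] s IH] x /=; first by rewrite invg1.
rewrite sw_end_cons -cats1 net_voltage_cat IH sw_end_rev /= mulg1 invMg.
by case: d; rewrite ?invgK.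
Qed.

Lemma balanced_net_voltage_eq (x : V) (s1 s2 : seq (V * bool)) :
  structurally_balanced e rho -> semiwalk e x s1 -> semiwalk e x s2 ->
  sw_end x s1 = sw_end x s2 -> net_voltage rho x s1 = net_voltage rho x s2.
Proof.
move=> balanced w1 w2 end12.
have := balanced x (s1 ++ sw_rev x s2).
rewrite semiwalk_cat sw_end_cat net_voltage_cat w1 end12 semiwalk_rev //.
rewrite sw_end_rev net_voltage_rev => /(_ isT erefl) /eqP.
by rewrite -eq_mulgV1 => /eqP.
Qed.

Lemma balanced_Net_full_card_leq (v : V) :
  structurally_balanced e rho -> Net_full e rho v -> #|gT| <= #|V|.
Proof.
move=> balanced full.
have walkP g : exists s, semiwalk e v s && (net_voltage rho v s == g).
  by have [s [ws <-]] := full g; exists s; rewrite ws eqxx.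
pose walk g := xchoose (walkP g).
have walk_spec g : semiwalk e v (walk g) && (net_voltage rho v (walk g) == g).
  exact: (xchooseP (walkP g)).
apply: (@leq_card _ _ (fun g => sw_end v (walk g))) => g1 g2 end12.
have /andP[w1 /eqP <-] := walk_spec g1; have /andP[w2 /eqP <-] := walk_spec g2.
exact: balanced_net_voltage_eq.
Qed.

End SemiWalkAlgebra.

Section PotentialVoltages.
Variables (V : finType) (e : rel V) (gT : finGroupType) (phi : V -> gT).

Definition potential_voltage (x y : V) : gT := (phi x)^-1 * phi y.

Lemma net_potential_voltage (x : V) (s : seq (V * bool)) :
  net_voltage potential_voltage x s = (phi x)^-1 * phi (sw_end x s).
Proof.
elim: s x => [|[y d] s IH] x /=; first by rewrite mulVg.
rewrite IH sw_end_cons /potential_voltage.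
by case: d; rewrite ?invMg ?invgK mulgA mulgK.
Qed.

Lemma potential_balanced : structurally_balanced e potential_voltage.
Proof. by move=> x s _ end_x; rewrite net_potential_voltage end_x mulVg. Qed.

Lemma potential_Net_full (v : V) :
  weakly_connected e -> (forall g, exists w, phi w = g) ->
  Net_full e potential_voltage v.
Proof.
move=> connected phi_onto g; have [w phi_w] := phi_onto (phi v * g).
have [s [ws end_w]] := connected v w.
by exists s; rewrite net_potential_voltage end_w phi_w mulKg.
Qed.

End PotentialVoltages.

Lemma exists_onto_of_card_leq (T T' : finType) :
  #|T'| <= #|T| -> T' -> exists f : T -> T', forall y, exists x, f x = y.
Proof.
move=> le_card y0; exists (fun x => nth y0 (enum T') (enum_rank x)) => y.
have lt_y : index y (enum T') < #|T|.
  by apply: leq_trans le_card; rewrite cardE index_mem mem_enum.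
by exists (enum_val (Ordinal lt_y)); rewrite enum_valK nth_index ?mem_enum.
Qed.

Theorem theorem2 (V : finType) (e : rel V) (gT : finGroupType) :
  simple_digraph e -> weakly_connected e ->
  ((exists rho : V -> V -> gT,
      structurally_balanced e rho /\ nondegenerate e rho)
   <-> #|gT| <= #|V|).
Proof.
move=> _ connected; split.
- by move=> [rho [balanced [v full]]]; exact: balanced_Net_full_card_leq full.
- move=> le_card; have [phi phi_onto] := exists_onto_of_card_leq le_card 1.
  have [v _] := phi_onto 1.
  exists (potential_voltage phi); split; first exact: potential_balanced.
  by exists v; apply: potential_Net_full.
Qed.
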